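(* Let $L\ge1$ be an integer and $h(x)=\mathrm{sech}\big((2L+1)\,\mathrm{arcsech}(x)\big)$. For $\epsilon\ll1$ (i.e. as $\epsilon\to0^+$), the larger solution $x_2\in(0,1)$ of the equation $h(x)+\epsilon=x$ satisfies $$x_2=1-\frac{1}{4(L^2+L)}\epsilon+\mathcal{O}(\epsilon^2).$$ *)

From Stdlib Require Import Reals Lra Lia.
Open Scope R_scope.

Definition sech (y : R) : R := / cosh y.

Definition arcsech (x : R) : R := ln ((1 + sqrt (1 - x ^ 2)) / x).

Definition h (L : nat) (x : R) : R := sech ((2 * INR L + 1) * arcsech x).

From Stdlib Require Import Reals Lra Psatz.
From Coquelicot Require Import Coquelicot.
Open Scope R_scope.

(** Substituting x = sech t, i.e. t = arcsech x >= 0, turns h x into sech (N t) with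
    N = 2L + 1, so the roots x of h x + eps = x are the points t > 0 where the gap
    sech t - sech (N t) equals eps, the largest root x being the smallest such t.
    Since sech t = 1 - t^2/2 + O(t^4), the gap is (N^2 - 1) t^2/2 + O(t^4) and it is
    increasing near 0; the intermediate value theorem yields its smallest root t2, and
    x2 = sech t2 = 1 - t2^2/2 + O(t2^4) = 1 - eps/(N^2 - 1) + O(eps^2), where
    N^2 - 1 = 4(L^2 + L).  The Taylor bounds on cosh and sinh are obtained by
    integrating cosh >= 1 repeatedly, through a comparison principle for derivatives. *)

Lemma cosh_pos x : 0 < cosh x.
Proof. unfold cosh. generalize (exp_pos x) (exp_pos (- x)). lra. Qed.

Lemma cosh2_sub_sinh2 x : cosh x ^ 2 - sinh x ^ 2 = 1.
Proof. unfold cosh, sinh. rewrite exp_Ropp. generalize (exp_pos x). intro. field. lra. Qed.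

Lemma cosh_ge1 x : 1 <= cosh x.
Proof. generalize (cosh_pos x) (cosh2_sub_sinh2 x). nra. Qed.

Lemma le_of_is_derive_le f g df dg a b : a <= b ->
  (forall x, a <= x <= b -> is_derive f x (df x)) ->
  (forall x, a <= x <= b -> is_derive g x (dg x)) ->
  (forall x, a <= x <= b -> df x <= dg x) ->
  f a <= g a -> f b <= g b.
Proof.
  intros Hab Hf Hg Hd Ha.
  assert (Hdiff : forall x, a <= x <= b ->
    is_derive (fun t => g t - f t) x (dg x - df x)).
  { intros x Hx. apply (is_derive_minus g f); auto. }
  destruct (MVT_gen (fun t => g t - f t) a b (fun t => dg t - df t)) as (c & Hc & Hmvt);
    rewrite ?Rmin_left, ?Rmax_right in * by lra.
  - intros x Hx. apply Hdiff. lra.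
  - intros x Hx. apply derivable_continuous_pt. exists (dg x - df x).
    apply is_derive_Reals, Hdiff, Hx.
  - assert (0 <= (dg c - df c) * (b - a)) by (apply Rmult_le_pos; generalize (Hd c Hc); lra).
    lra.
Qed.

Lemma id_le_sinh u : 0 <= u -> u <= sinh u.
Proof.
  intros Hu. apply (le_of_is_derive_le (fun x => x) sinh (fun _ => 1) cosh 0 u Hu).
  - intros x _. auto_derive; auto.
  - intros x _. auto_derive; auto; ring.
  - intros x _. apply cosh_ge1.
  - rewrite sinh_0. lra.
Qed.

Lemma cosh_le_compat a b : 0 <= a <= b -> cosh a <= cosh b.
Proof.
  intros Hab. apply (le_of_is_derive_le (fun _ => cosh a) cosh (fun _ => 0) sinh a b);
    try lra.
  - intros x _. auto_derive; auto.
  - intros x _. auto_derive; auto; ring.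
  - intros x Hx. generalize (id_le_sinh x). lra.
Qed.

Lemma cosh_le_2 u : 0 <= u <= 1 -> cosh u <= 2.
Proof.
  intros Hu. apply Rle_trans with (cosh 1); [apply cosh_le_compat; lra|].
  unfold cosh. rewrite exp_Ropp.
  assert (He : 2 <= exp 1) by (generalize (exp_ineq1_le 1); lra).
  assert (/ exp 1 <= / 2) by (apply Rinv_le_contravar; lra).
  generalize exp_le_3. lra.
Qed.

Lemma sinh_le_2x u : 0 <= u <= 1 -> sinh u <= 2 * u.
Proof.
  intros Hu. apply (le_of_is_derive_le sinh (fun x => 2 * x) cosh (fun _ => 2) 0 u); try lra.
  - intros x _. auto_derive; auto; ring.
  - intros x _. auto_derive; auto; ring.
  - intros x Hx. apply cosh_le_2. lra.
  - rewrite sinh_0. lra.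
Qed.

Lemma cosh_le_1_add_sqr u : 0 <= u <= 1 -> cosh u <= 1 + u ^ 2.
Proof.
  intros Hu.
  apply (le_of_is_derive_le cosh (fun x => 1 + x ^ 2) sinh (fun x => 2 * x) 0 u); try lra.
  - intros x _. auto_derive; auto; ring.
  - intros x _. auto_derive; auto; ring.
  - intros x Hx. apply sinh_le_2x. lra.
  - rewrite cosh_0. lra.
Qed.

Lemma sinh_le_cubic u : 0 <= u <= 1 -> sinh u <= u + u ^ 3 / 3.
Proof.
  intros Hu.
  apply (le_of_is_derive_le sinh (fun x => x + x ^ 3 / 3) cosh (fun x => 1 + x ^ 2) 0 u);
    try lra.
  - intros x _. auto_derive; auto; ring.
  - intros x _. auto_derive; auto; field.
  - intros x Hx. apply cosh_le_1_add_sqr. lra.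
  - rewrite sinh_0. lra.
Qed.

Lemma cosh_le_quartic u : 0 <= u <= 1 -> cosh u <= 1 + u ^ 2 / 2 + u ^ 4 / 12.
Proof.
  intros Hu.
  apply (le_of_is_derive_le cosh (fun x => 1 + x ^ 2 / 2 + x ^ 4 / 12) sinh
           (fun x => x + x ^ 3 / 3) 0 u); try lra.
  - intros x _. auto_derive; auto; ring.
  - intros x _. auto_derive; auto; field.
  - intros x Hx. apply sinh_le_cubic. lra.
  - rewrite cosh_0. lra.
Qed.

Lemma cosh_ge_quadratic u : 0 <= u -> 1 + u ^ 2 / 2 <= cosh u.
Proof.
  intros Hu.
  apply (le_of_is_derive_le (fun x => 1 + x ^ 2 / 2) cosh (fun x => x) sinh 0 u); try lra.
  - intros x _. auto_derive; auto; field.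
  - intros x _. auto_derive; auto; ring.
  - intros x Hx. apply id_le_sinh. lra.
  - rewrite cosh_0. lra.
Qed.

Lemma sech_taylor2 u : 0 <= u <= 1 -> Rabs (1 - sech u - u ^ 2 / 2) <= u ^ 4 / 2.
Proof.
  intros Hu. unfold sech.
  assert (Hup := cosh_le_quartic u Hu). assert (Hlo := cosh_ge_quadratic u (proj1 Hu)).
  assert (Hc := cosh_ge1 u).
  replace (1 - / cosh u - u ^ 2 / 2) with ((cosh u - 1 - u ^ 2 * cosh u / 2) / cosh u)
    by (field; lra).
  assert (0 <= u ^ 2 <= 1) by (split; nra).
  apply Rabs_le. split;
    (apply Rmult_le_reg_r with (cosh u); [lra|]; unfold Rdiv;
     rewrite Rmult_assoc, Rinv_l by lra; nra).
Qed.

Lemma sech_lt_1 t : 0 < t -> 0 < sech t < 1.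
Proof.
  intros Ht. unfold sech. assert (Hc := cosh_ge_quadratic t (Rlt_le _ _ Ht)).
  split; [apply Rinv_0_lt_compat, cosh_pos|].
  rewrite <- Rinv_1. apply Rinv_lt_contravar; nra.
Qed.

Lemma sech_le_compat a b : 0 <= a <= b -> sech b <= sech a.
Proof.
  intros Hab. apply Rinv_le_contravar; [apply cosh_pos | apply cosh_le_compat, Hab].
Qed.

Lemma arcsech_sech t : 0 <= t -> arcsech (sech t) = t.
Proof.
  intros Ht. unfold arcsech, sech.
  assert (Hc := cosh_ge1 t). assert (Hs := id_le_sinh t Ht).
  replace (1 - (/ cosh t) ^ 2) with ((sinh t / cosh t) ^ 2)
    by (field_simplify_eq; [generalize (cosh2_sub_sinh2 t); lra | lra]).
  rewrite sqrt_pow2 by (apply Rdiv_le_0_compat; lra).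
  replace ((1 + sinh t / cosh t) / / cosh t) with (exp t)
    by (unfold cosh, sinh; field; generalize (exp_pos t) (exp_pos (- t)); lra).
  apply ln_exp.
Qed.

Lemma arcsech_gt0 y : 0 < y < 1 -> 0 < arcsech y.
Proof.
  intros Hy. unfold arcsech. rewrite <- ln_1. apply ln_increasing; [lra|].
  assert (Hr := sqrt_pos (1 - y ^ 2)).
  apply Rmult_lt_reg_r with y; [lra|]. unfold Rdiv.
  rewrite Rmult_assoc, Rinv_l by lra. lra.
Qed.

Lemma sech_arcsech y : 0 < y <= 1 -> sech (arcsech y) = y.
Proof.
  intros Hy. unfold arcsech, sech, cosh.
  assert (Hr := sqrt_pos (1 - y ^ 2)).
  assert (Hr2 : sqrt (1 - y ^ 2) ^ 2 = 1 - y ^ 2) by (apply pow2_sqrt; nra).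
  rewrite exp_Ropp, exp_ln by (apply Rdiv_lt_0_compat; lra).
  field_simplify_eq; [nra | split; lra].
Qed.

(* [p1] and [p2] stand for 1 - sech t and 1 - sech (N t). *)
Section TwoScaleExpansion.

Variables N t p1 p2 : R.
Hypothesis HN : 3 <= N.
Hypothesis Ht : 0 <= t.
Hypothesis HNt : N ^ 2 * t <= 1.
Hypothesis Hp1 : Rabs (p1 - t ^ 2 / 2) <= t ^ 4 / 2.
Hypothesis Hp2 : Rabs (p2 - (N * t) ^ 2 / 2) <= (N * t) ^ 4 / 2.

Lemma two_scale_gap_ge : (N ^ 2 - 1) * t ^ 2 / 4 <= p2 - p1.
Proof.
  apply Rabs_le_between in Hp1. apply Rabs_le_between in Hp2.
  assert (Ht2 : 0 <= t ^ 2) by nra.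
  assert (0 <= N ^ 2 * t) by (apply Rmult_le_pos; nra).
  assert (N ^ 4 * t ^ 2 <= 1)
    by (replace (N ^ 4 * t ^ 2) with ((N ^ 2 * t) ^ 2) by ring; nra).
  assert (HN2 : 9 <= N ^ 2) by nra.
  assert (HN4 : 81 <= N ^ 4) by (replace (N ^ 4) with (N ^ 2 * N ^ 2) by ring; nra).
  assert (N ^ 4 * t ^ 4 <= t ^ 2)
    by (replace (N ^ 4 * t ^ 4) with (N ^ 4 * t ^ 2 * t ^ 2) by ring; nra).
  assert (t ^ 4 <= t ^ 2 / 81) by nra.
  replace ((N * t) ^ 4) with (N ^ 4 * t ^ 4) in Hp2 by ring.
  nra.
Qed.

Lemma two_scale_expansion :
  Rabs ((1 - p1) - (1 - (p2 - p1) / (N ^ 2 - 1)))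
    <= 16 * N ^ 4 / (N ^ 2 - 1) ^ 3 * (p2 - p1) ^ 2.
Proof.
  assert (Hgap := two_scale_gap_ge).
  set (K := N ^ 2 - 1) in *. set (F := p2 - p1) in *.
  assert (HN2 : 9 <= N ^ 2) by nra.
  assert (HK : 8 <= K) by (unfold K; lra).
  replace ((1 - p1) - (1 - F / K)) with ((p2 - N ^ 2 * p1) / K)
    by (unfold F, K in *; field; lra).
  assert (Hnum : Rabs (p2 - N ^ 2 * p1) <= N ^ 4 * t ^ 4).
  { replace (p2 - N ^ 2 * p1) with ((p2 - (N * t) ^ 2 / 2) - N ^ 2 * (p1 - t ^ 2 / 2))
      by field.
    apply Rabs_le_between in Hp1. apply Rabs_le_between in Hp2.
    replace ((N * t) ^ 4) with (N ^ 4 * t ^ 4) in Hp2 by ring.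
    assert (N ^ 2 <= N ^ 4) by (replace (N ^ 4) with (N ^ 2 * N ^ 2) by ring; nra).
    assert (N ^ 2 * t ^ 4 <= N ^ 4 * t ^ 4) by (apply Rmult_le_compat_r; nra).
    apply Rabs_le. split; nra. }
  assert (Ht4 : t ^ 4 <= (4 * F / K) ^ 2).
  { replace (t ^ 4) with ((t ^ 2) ^ 2) by ring. apply pow_incr. split; [nra|].
    apply Rmult_le_reg_r with K; [lra|]. unfold Rdiv. rewrite Rmult_assoc, Rinv_l; lra. }
  unfold Rdiv at 1. rewrite Rabs_mult, Rabs_inv, (Rabs_right K) by lra.
  apply Rle_trans with (N ^ 4 * (4 * F / K) ^ 2 * / K).
  - apply Rmult_le_compat_r; [apply Rlt_le, Rinv_0_lt_compat; lra|].
    apply Rle_trans with (N ^ 4 * t ^ 4); [exact Hnum|].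
    apply Rmult_le_compat_l; nra.
  - apply Req_le. field. lra.
Qed.

End TwoScaleExpansion.

Definition sech_gap (N t : R) : R := sech t - sech (N * t).

Lemma sech_gap_0 N : sech_gap N 0 = 0.
Proof. unfold sech_gap. rewrite Rmult_0_r. ring. Qed.

Lemma is_derive_sech_gap N t :
  is_derive (sech_gap N) t (N * sinh (N * t) / cosh (N * t) ^ 2 - sinh t / cosh t ^ 2).
Proof.
  unfold sech_gap, sech. auto_derive.
  - generalize (cosh_pos t) (cosh_pos (N * t)). lra.
  - field. generalize (cosh_pos t) (cosh_pos (N * t)). lra.
Qed.

Lemma continuity_sech_gap N : continuity (sech_gap N).
Proof.
  intros t. apply derivable_continuous_pt. eexists. apply is_derive_Reals, is_derive_sech_gap.
Qed.

Lemma sech_gap_derive_gt0 N t : 3 <= N -> 0 < t -> N * t <= 1 ->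
  0 < N * sinh (N * t) / cosh (N * t) ^ 2 - sinh t / cosh t ^ 2.
Proof.
  intros HN Ht HNt.
  assert (Hs1 := sinh_le_2x t ltac:(nra)). assert (Hc1 := cosh_ge1 t).
  assert (Hs2 := id_le_sinh (N * t) ltac:(nra)). assert (Hc2 := cosh_ge1 (N * t)).
  assert (Hc2' := cosh_le_2 (N * t) ltac:(nra)).
  assert (A : sinh t / cosh t ^ 2 <= 2 * t).
  { assert (1 <= cosh t ^ 2) by nra.
    apply Rmult_le_reg_r with (cosh t ^ 2); [lra|].
    unfold Rdiv. rewrite Rmult_assoc, Rinv_l by lra. nra. }
  assert (B : N * (N * t) / 4 <= N * sinh (N * t) / cosh (N * t) ^ 2).
  { assert (1 <= cosh (N * t) ^ 2 <= 4) by (split; nra).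
    apply Rmult_le_reg_r with (cosh (N * t) ^ 2); [lra|].
    unfold Rdiv. rewrite (Rmult_assoc (N * sinh (N * t))), Rinv_l by lra.
    assert (0 <= N * (N * t)) by nra.
    apply Rle_trans with (N * (N * t)); nra. }
  assert (9 <= N * N) by nra.
  assert (9 * t <= N * (N * t)) by nra.
  lra.
Qed.

Lemma sech_gap_increasing N a b : 3 <= N -> 0 < a -> a < b -> N * b < 1 ->
  sech_gap N a < sech_gap N b.
Proof.
  intros HN Ha Hab HNb.
  apply (incr_function _ (Finite 0) (Finite (/ N)) _ (fun t _ _ => is_derive_sech_gap N t));
    simpl; auto.
  - intros t Ht HtN. apply sech_gap_derive_gt0; auto.
    apply Rmult_le_reg_r with (/ N); [apply Rinv_0_lt_compat; lra|].
    rewrite Rmult_comm, <- Rmult_assoc, Rinv_l by lra. lra.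
  - apply Rmult_lt_reg_l with N; [lra|]. rewrite Rinv_r; lra.
Qed.

Section SechGapExpansion.

Variables N t : R.
Hypothesis HN : 3 <= N.
Hypothesis Ht : 0 <= t.
Hypothesis HNt : N ^ 2 * t <= 1.

Let sech_taylor2_t : Rabs ((1 - sech t) - t ^ 2 / 2) <= t ^ 4 / 2.
Proof. apply sech_taylor2. nra. Qed.

Let sech_taylor2_Nt : Rabs ((1 - sech (N * t)) - (N * t) ^ 2 / 2) <= (N * t) ^ 4 / 2.
Proof. apply sech_taylor2. nra. Qed.

Lemma sech_gap_ge : (N ^ 2 - 1) * t ^ 2 / 4 <= sech_gap N t.
Proof.
  replace (sech_gap N t) with ((1 - sech (N * t)) - (1 - sech t)) by (unfold sech_gap; ring).
  exact (two_scale_gap_ge N t _ _ HN Ht HNt sech_taylor2_t sech_taylor2_Nt).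
Qed.

Lemma sech_gap_expansion :
  Rabs (sech t - (1 - sech_gap N t / (N ^ 2 - 1)))
    <= 16 * N ^ 4 / (N ^ 2 - 1) ^ 3 * sech_gap N t ^ 2.
Proof.
  replace (sech_gap N t) with ((1 - sech (N * t)) - (1 - sech t)) by (unfold sech_gap; ring).
  replace (sech t) with (1 - (1 - sech t)) at 1 by ring.
  exact (two_scale_expansion N t _ _ HN Ht HNt sech_taylor2_t sech_taylor2_Nt).
Qed.

End SechGapExpansion.

Lemma sech_gap_least_root N eps : 3 <= N -> 0 < eps < sech_gap N (/ N ^ 2) ->
  exists t, 0 < t < / N ^ 2 /\ sech_gap N t = eps /\
    forall s, 0 < s -> sech_gap N s = eps -> t <= s.
Proof.
  intros HN Heps.
  assert (Htau : 0 < / N ^ 2) by (apply Rinv_0_lt_compat; nra).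
  assert (HNtau : N * / N ^ 2 < 1).
  { replace (N * / N ^ 2) with (/ N) by (field; lra).
    rewrite <- Rinv_1. apply Rinv_lt_contravar; lra. }
  destruct (IVT_gen (sech_gap N) 0 (/ N ^ 2) eps (continuity_sech_gap N))
    as (t & Ht & Hroot);
    rewrite ?sech_gap_0, ?Rmin_left, ?Rmax_right in * by lra.
  - lra.
  - assert (Ht' : 0 < t < / N ^ 2).
    { split; apply Rnot_le_lt; intros Hle.
      - replace t with 0 in Hroot by lra. rewrite sech_gap_0 in Hroot. lra.
      - replace t with (/ N ^ 2) in Hroot by lra. lra. }
    exists t. split; [exact Ht' | split; [exact Hroot |]].
    intros s Hs Hsroot. apply Rnot_lt_le. intros Hst.
    assert (sech_gap N s < sech_gap N t) by (apply sech_gap_increasing; nra).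
    lra.
Qed.

Theorem proposition4 (L : nat) (HL : (1 <= L)%nat) :
  exists eps0 C : R, 0 < eps0 /\
    forall eps : R, 0 < eps < eps0 ->
      exists x2 : R,
        0 < x2 < 1 /\ h L x2 + eps = x2 /\
        (forall y : R, 0 < y < 1 -> h L y + eps = y -> y <= x2) /\
        Rabs (x2 - (1 - eps / (4 * (INR L ^ 2 + INR L)))) <= C * eps ^ 2.
Proof.
  set (N := 2 * INR L + 1).
  assert (HN : 3 <= N) by (apply (le_INR 1) in HL; unfold N; simpl in HL; lra).
  replace (4 * (INR L ^ 2 + INR L)) with (N ^ 2 - 1) by (unfold N; ring).
  set (tau := / N ^ 2).
  assert (Htau : 0 < tau) by (apply Rinv_0_lt_compat; nra).
  assert (HNtau : N ^ 2 * tau = 1) by (unfold tau; field; lra).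
  assert (Hgap_tau := sech_gap_ge N tau HN (Rlt_le _ _ Htau) (Req_le _ _ HNtau)).
  exists ((N ^ 2 - 1) * tau ^ 2 / 4), (16 * N ^ 4 / (N ^ 2 - 1) ^ 3).
  split; [apply Rdiv_lt_0_compat; [apply Rmult_lt_0_compat; [nra | apply pow_lt] |]; lra |].
  intros eps Heps.
  destruct (sech_gap_least_root N eps HN) as (t & Ht & Hroot & Hleast); [fold tau; lra |].
  fold tau in Ht.
  assert (Hh : forall s, 0 <= s -> h L (sech s) = sech (N * s)).
  { intros s Hs. unfold h. rewrite arcsech_sech by exact Hs. reflexivity. }
  exists (sech t). split; [apply sech_lt_1; lra |]. split.
  { rewrite Hh by lra. unfold sech_gap in Hroot. lra. }
  split.
  - intros y Hy Hyroot.
    assert (Hs := arcsech_gt0 y Hy).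
    rewrite <- (sech_arcsech y) in Hyroot |- * by lra.
    apply sech_le_compat. split; [lra |]. apply Hleast; [exact Hs |].
    rewrite Hh in Hyroot by lra. unfold sech_gap. lra.
  - rewrite <- Hroot. apply sech_gap_expansion; [lra | lra |].
    rewrite <- HNtau. apply Rmult_le_compat_l; nra.
Qed.
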